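(* Let $K>0$, $S=1/K$, and let $\theta:[S,\infty)\to[0,\infty)$ satisfy $\theta(s)>0$ for every $s>S$. Let $\Delta t,\Delta N>0$ and consider the update $$X(t+\Delta t,N)=X(t,N)+\Delta t\,\theta\big(D(t,N)\big),$$ where the spacing estimate $D(t,N)$ (approximating $-X_N$) is one of the following non-anisotropic discretizations: (a) forward difference $D(t,N)=\frac{X(t,N)-X(t,N+\Delta N)}{\Delta N}$; (b) arithmetic central difference $D(t,N)=\frac{X(t,N-\Delta N)-X(t,N+\Delta N)}{2\Delta N}$; (c) harmonic central difference $D(t,N)=\dfrac{2}{\frac{\Delta N}{X(t,N)-X(t,N+\Delta N)}+\frac{\Delta N}{X(t,N-\Delta N)-X(t,N)}}$. Then in each case the model is not collision-free: there exist positions at time $t$ with $X(t,N-\Delta N)-X(t,N)=S\Delta N$ and $X(t,N)-X(t,N+\Delta N)>S\Delta N$, with the leader stopped ($X(t+\Delta t,N-\Delta N)=X(t,N-\Delta N)$), such that $X(t+\Delta t,N-\Delta N)-X(t+\Delta t,N)<S\Delta N$.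
   Context: $X(t,N)$ is the location at time $t$ of vehicle $N$; vehicle $N-\Delta N$ is the leader and vehicle $N+\Delta N$ the follower of vehicle $N$. $\theta$ is the speed-spacing relation, $K$ the jam density and $S$ the jam spacing. A model is collision-free if spacings $X(t,N-\Delta N)-X(t,N)$ never fall below $S\Delta N$. *)

From Stdlib Require Import Reals Lra.
Open Scope R_scope.

Inductive scheme := Forward | ArithCentral | HarmonicCentral.

(* X t N : location at time t of vehicle N (leader N - dN, follower N + dN). *)
Definition spacing_est (sc : scheme) (X : R -> R -> R) (dN t N : R) : R :=
  match sc with
  | Forward => (X t N - X t (N + dN)) / dN
  | ArithCentral => (X t (N - dN) - X t (N + dN)) / (2 * dN)
  | HarmonicCentral =>
      2 / (dN / (X t N - X t (N + dN)) + dN / (X t (N - dN) - X t N))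
  end.

(** The jam spacing [S = 1/K] is a barrier only if a vehicle at spacing
    exactly [S ΔN] behind its leader stays put.  All three discretizations
    also look at the follower's gap: when that gap exceeds [S ΔN], each
    spacing estimate exceeds [S], so [θ] is positive and the vehicle moves
    forward while its stopped leader does not, pushing the spacing below
    [S ΔN]. *)

From Stdlib Require Import Reals Lra.
Open Scope R_scope.

Lemma spacing_est_ext (sc : scheme) (X Y : R -> R -> R) (dN t N : R) :
  (forall n, X t n = Y t n) ->
  spacing_est sc X dN t N = spacing_est sc Y dN t N.
Proof. intros HXY; destruct sc; simpl; now rewrite !HXY. Qed.

Lemma jam_lt_spacing_est (sc : scheme) (X : R -> R -> R) (s dN t N : R) :
  0 < s -> 0 < dN ->
  X t (N - dN) - X t N = s * dN ->
  X t N - X t (N + dN) > s * dN ->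
  s < spacing_est sc X dN t N.
Proof.
  intros Hs HdN Hfront Hback.
  set (b := X t N - X t (N + dN)) in Hback.
  assert (HsdN : 0 < s * dN) by (apply Rmult_lt_0_compat; assumption).
  destruct sc; simpl.
  - apply (Rmult_lt_reg_r dN); [assumption |].
    fold b; field_simplify; lra.
  - apply (Rmult_lt_reg_r (2 * dN)); [lra |].
    replace (X t (N - dN) - X t (N + dN)) with (s * dN + b) by (unfold b; lra).
    field_simplify; lra.
  - rewrite Hfront; fold b.
    set (h := dN / b + dN / (s * dN)).
    (* [dN / b < 1 / s] because the back gap [b] exceeds [s dN]. *)
    assert (Hh : 0 < s * h < 2).
    { unfold h; replace (s * (dN / b + dN / (s * dN))) with (s * dN / b + 1)
        by (field; lra).
      split.
      + apply Rplus_lt_0_compat; [apply Rdiv_lt_0_compat |]; lra.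
      + apply Rplus_lt_compat_r, (Rmult_lt_reg_r b); [lra |].
        field_simplify; lra. }
    assert (0 < h) by nra.
    apply (Rmult_lt_reg_r h); [assumption |].
    field_simplify; lra.
Qed.

Definition two_density_platoon (s : R) (n : R) : R :=
  if Rle_dec n 0 then - s * n else - 2 * s * n.

Definition move_vehicle_at (x0 : R -> R) (t1 N y : R) : R -> R -> R :=
  fun t n => if Req_EM_T t t1 then if Req_EM_T n N then y else x0 n else x0 n.

Lemma move_vehicle_at_other_time (x0 : R -> R) (t1 N y t n : R) :
  t <> t1 -> move_vehicle_at x0 t1 N y t n = x0 n.
Proof. intros Ht; unfold move_vehicle_at; now destruct (Req_EM_T t t1). Qed.

Lemma move_vehicle_at_moved (x0 : R -> R) (t1 N y : R) :
  move_vehicle_at x0 t1 N y t1 N = y.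
Proof.
  unfold move_vehicle_at.
  destruct (Req_EM_T t1 t1); [destruct (Req_EM_T N N) |]; easy.
Qed.

Lemma move_vehicle_at_other (x0 : R -> R) (t1 N y n : R) :
  n <> N -> move_vehicle_at x0 t1 N y t1 n = x0 n.
Proof.
  intros Hn; unfold move_vehicle_at.
  destruct (Req_EM_T t1 t1); [destruct (Req_EM_T n N) |]; easy.
Qed.

Theorem theorem4p4 (K : R) (theta : R -> R) (dt dN : R) (sc : scheme) :
  0 < K ->
  (forall s, 1 / K <= s -> 0 <= theta s) ->
  (forall s, 1 / K < s -> 0 < theta s) ->
  0 < dt -> 0 < dN ->
  exists (X : R -> R -> R) (t N : R),
    X t (N - dN) - X t N = (1 / K) * dN /\
    X t N - X t (N + dN) > (1 / K) * dN /\
    X (t + dt) N = X t N + dt * theta (spacing_est sc X dN t N) /\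
    X (t + dt) (N - dN) = X t (N - dN) /\
    X (t + dt) (N - dN) - X (t + dt) N < (1 / K) * dN.
Proof.
  intros HK _ Hpos Hdt HdN.
  set (s := 1 / K).
  assert (Hs : 0 < s) by (apply Rdiv_lt_0_compat; lra).
  set (x0 := two_density_platoon s).
  set (D := spacing_est sc (fun _ => x0) dN 0 0).
  set (X := move_vehicle_at x0 dt 0 (dt * theta D)).
  assert (Hnow : forall n, X 0 n = x0 n)
    by (intros n; apply move_vehicle_at_other_time; lra).
  assert (Hleader : x0 (0 - dN) = s * dN)
    by (unfold x0, two_density_platoon; destruct (Rle_dec (0 - dN) 0); lra).
  assert (Hego : x0 0 = 0)
    by (unfold x0, two_density_platoon; destruct (Rle_dec 0 0); lra).
  assert (Hfollower : x0 (0 + dN) = - 2 * s * dN)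
    by (unfold x0, two_density_platoon; destruct (Rle_dec (0 + dN) 0); lra).
  assert (HsdN : 0 < s * dN) by (apply Rmult_lt_0_compat; lra).
  assert (HD : s < D) by (apply jam_lt_spacing_est with (s := s); simpl; lra).
  assert (Hmove : 0 < dt * theta D) by (apply Rmult_lt_0_compat; auto).
  exists X, 0, 0.
  rewrite (Rplus_0_l dt), !Hnow, (spacing_est_ext sc X (fun _ => x0)) by exact Hnow.
  unfold X; rewrite move_vehicle_at_moved, move_vehicle_at_other by lra.
  fold D; lra.
Qed.
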